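(* $\mathcal M_\infty\subset\mathcal M_{-\infty}$.
   Context: Standing assumptions: $H$ is a real Hilbert space with norm $|\cdot|$. $A$ is a linear, closed, unbounded, positive self-adjoint operator on $H$ with compact inverse, so $H$ has an orthonormal basis of eigenvectors of $A$ with eigenvalues $0<\lambda_1<\lambda_2\le\cdots\le\lambda_N<\lambda_{N+1}\le\cdots\to\infty$ (counted with multiplicity). $F:H\to H$ satisfies $|F(u)|\le K_0$ and $|F(u)-F(v)|\le K_1|u-v|$ for all $u,v\in H$, with constants $K_0,K_1>0$ and $K_1<\lambda_{N+1}$; moreover there is $R>0$ with $F(u)=0$ whenever $|u|\ge R$. $P$ is the orthogonal (spectral) projection onto the span of the first $N$ eigenvectors of $A$, and $Q=I-P$; points of $H$ are identified with pairs $(p,q)\in PH\times QH$. A solution on an interval $J$ means a continuous function satisfying the variation of constants formula $u(t)=e^{-A(t-s)}u(s)+\int_s^t e^{-A(t-\tau)}F(u(\tau))\,d\tau$ for all $s\le t$ in $J$. For $t>0$, $\mathcal M_t=\{u(t): u \text{ is a solution of } u_t+Au=F(u) \text{ on } [0,t] \text{ with } Pu(0)\in PH \text{ arbitrary and } Qu(0)=0\}$. $\mathcal M_\infty$ is the set of all $(p_\infty,q_\infty)\in H$ for which there exist integers $n_1<n_2<\cdots$ and points $(p_{n_k},q_{n_k})\in\mathcal M_{n_k}$ with $(p_{n_k},q_{n_k})\to(p_\infty,q_\infty)$ in $H$. $\mathcal M_{-\infty}$ is the set of all $(p_0,q_0)\in H$ such that there is a solution $u(t)=p(t)+q(t)$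 of $u_t+Au=F(u)$ on $(-\infty,0]$ with $p(0)=p_0$, $q(0)=q_0$ and $q(t)=Qu(t)$ bounded on $(-\infty,0]$ (the backward bounded solutions). *)

(* Concrete model: H = l^2(nat) (real square-summable sequences), where the
   k-th coordinate is the coefficient along the (k+1)-th eigenvector of A,
   and A acts diagonally with eigenvalues lam k (lam 0 = lambda_1, ...). *)
From Stdlib Require Import Reals Lra.
From Coquelicot Require Import Coquelicot.
Open Scope R_scope.

Definition vec := nat -> R.

Definition l2 (x : vec) : Prop := ex_series (fun k => (x k) ^ 2).

Definition nrm (x : vec) : R := sqrt (Series (fun k => (x k) ^ 2)).

Definition vdist (x y : vec) : R := nrm (fun k => x k - y k).

Definition Pproj (N : nat) (x : vec) : vec := fun k => if (k <? N)%nat then x k else 0.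
Definition Qproj (N : nat) (x : vec) : vec := fun k => if (k <? N)%nat then 0 else x k.

Definition H_continuous_on (J : R -> Prop) (u : R -> vec) : Prop :=
  (forall t, J t -> l2 (u t)) /\
  (forall t, J t -> forall eps, 0 < eps -> exists delta, 0 < delta /\
     forall s, J s -> Rabs (s - t) < delta -> vdist (u s) (u t) < eps).

(* mild solution of u_t + A u = F(u) on J: continuous and satisfying the
   variation of constants formula; e^{-A t} is diagonal (e^{-lam k t}), and
   the H-valued integral is taken coordinatewise. *)
Definition mild_solution (lam : nat -> R) (F : vec -> vec) (J : R -> Prop)
  (u : R -> vec) : Prop :=
  H_continuous_on J u /\
  forall s t, J s -> J t -> s <= t -> forall k,
    u t k = exp (- lam k * (t - s)) * u s k
            + RInt (fun tau => exp (- lam k * (t - tau)) * F (u tau) k) s t.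

Definition M_t (lam : nat -> R) (F : vec -> vec) (N : nat) (t : R) (x : vec) : Prop :=
  exists u : R -> vec,
    mild_solution lam F (fun s => 0 <= s <= t) u /\
    Qproj N (u 0) = (fun _ => 0) /\
    x = u t.

Definition M_inf (lam : nat -> R) (F : vec -> vec) (N : nat) (x : vec) : Prop :=
  l2 x /\
  exists (n : nat -> nat) (xs : nat -> vec),
    (0 < n 0)%nat /\ (forall j, (n j < n (S j))%nat) /\
    (forall j, M_t lam F N (INR (n j)) (xs j)) /\
    is_lim_seq (fun j => vdist (xs j) x) 0.

Definition M_minf (lam : nat -> R) (F : vec -> vec) (N : nat) (x : vec) : Prop :=
  exists u : R -> vec,
    mild_solution lam F (fun s => s <= 0) u /\
    u 0 = x /\
    exists C, forall t, t <= 0 -> nrm (Qproj N (u t)) <= C.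

(* Let [x] be the limit of the endpoints of solutions [U_j] on [0, n_j] that start
   in [PH]; shifted in time they become solutions [W_j] on [-n_j, 0] ending near [x].  Running the
   variation of constants formula backwards from [t = 0] bounds each coordinate of [W_j], uniformly
   in [j], on every [-T0, 0], and makes it Lipschitz in time there; since [Q W_j] starts at [0],
   Cauchy-Schwarz in the same formula bounds every tail [|Q_M W_j(t)|] by [K0 / lam M].  A diagonal
   subsequence converges at every coordinate and every point of a dense grid, hence uniformly on
   compact time intervals, and the tail bound upgrades this to uniform convergence in [H].  The limit
   is then a continuous solution on [(-oo, 0]] through [x] with [|Q u(t)| <= K0 / lam N]. *)

From Stdlib Require Import Reals Lra Lia ClassicalEpsilon FunctionalExtensionality Cantor.
From Coquelicot Require Import Coquelicot.
Open Scope R_scope.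

(** * Square-summable sequences *)

(* Coquelicot's [sum_n] lemmas are stated with [plus] and [scal]; these versions rewrite on real goals. *)
Lemma sum_Sn_R (a : nat -> R) K : sum_n a (S K) = sum_n a K + a (S K).
Proof. exact (sum_Sn a K). Qed.

Lemma sum_n_le_R (a b : nat -> R) K : (forall k, a k <= b k) -> sum_n a K <= sum_n b K.
Proof. intros H. exact (sum_n_m_le a b 0 K H). Qed.

Lemma sum_n_plus_R (a b : nat -> R) K : sum_n (fun k => a k + b k) K = sum_n a K + sum_n b K.
Proof. exact (sum_n_plus a b K). Qed.

Lemma sum_n_mult_l_R (c : R) (a : nat -> R) K : sum_n (fun k => c * a k) K = c * sum_n a K.
Proof. exact (sum_n_scal_l c a K). Qed.

Lemma sum_n_nonneg (a : nat -> R) K : (forall k, 0 <= a k) -> 0 <= sum_n a K.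
Proof.
  intros H. rewrite <- (Rmult_0_r (INR (S K))), <- sum_n_const. now apply sum_n_le_R.
Qed.

Lemma sum_n_incr (a : nat -> R) K : (forall k, 0 <= a k) -> sum_n a K <= sum_n a (S K).
Proof. intros H. rewrite sum_Sn_R. specialize (H (S K)). lra. Qed.

Lemma term_le_sum_n (a : nat -> R) k : (forall i, 0 <= a i) -> a k <= sum_n a k.
Proof.
  intros H. destruct k as [|k].
  - rewrite sum_O. lra.
  - rewrite sum_Sn_R. pose proof (sum_n_nonneg a k H). lra.
Qed.

Lemma sum_n_indicator_le (c : R) M K : 0 <= c ->
  sum_n (fun k => if (k <? M)%nat then c else 0) K <= INR M * c.
Proof.
  intros Hc.
  assert (E : sum_n (fun k => if (k <? M)%nat then c else 0) K = INR (Nat.min (S K) M) * c).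
  { induction K as [|K IH].
    - rewrite sum_O. destruct (0 <? M)%nat eqn:E.
      + apply Nat.ltb_lt in E. replace (Nat.min 1 M) with 1%nat by lia. simpl. ring.
      + apply Nat.ltb_ge in E. replace (Nat.min 1 M) with 0%nat by lia. simpl. ring.
    - rewrite sum_Sn_R, IH. destruct (S K <? M)%nat eqn:E.
      + apply Nat.ltb_lt in E. replace (Nat.min (S (S K)) M) with (S (Nat.min (S K) M)) by lia.
        rewrite S_INR; lra.
      + apply Nat.ltb_ge in E. replace (Nat.min (S (S K)) M) with (Nat.min (S K) M) by lia. lra. }
  rewrite E. apply Rmult_le_compat_r; [exact Hc|]. apply le_INR. lia.
Qed.

Lemma is_lim_seq_sum_n (c : nat -> nat -> R) (l : nat -> R) K :
  (forall k, is_lim_seq (fun j => c j k) (l k)) ->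
  is_lim_seq (fun j => sum_n (c j) K) (sum_n l K).
Proof.
  intros H. induction K as [|K IH].
  - rewrite sum_O. apply (is_lim_seq_ext (fun j => c j 0%nat)); [|apply H].
    intros j. now rewrite sum_O.
  - rewrite sum_Sn_R. apply (is_lim_seq_ext (fun j => sum_n (c j) K + c j (S K))).
    + intros j. now rewrite sum_Sn_R.
    + now apply is_lim_seq_plus'.
Qed.

Lemma partial_sum_le_Series (a : nat -> R) K :
  (forall k, 0 <= a k) -> ex_series a -> sum_n a K <= Series a.
Proof.
  intros Ha Hex. apply (is_lim_seq_incr_compare (sum_n a)).
  - exact (Series_correct a Hex).
  - intros n. now apply sum_n_incr.
Qed.

Lemma l2_of_partial_sums (a : vec) B :
  (forall K, sum_n (fun k => a k ^ 2) K <= B) -> l2 a /\ nrm a <= sqrt B.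
Proof.
  intros HB.
  assert (Hsq : forall k, 0 <= a k ^ 2) by (intros; apply pow2_ge_0).
  destruct (ex_finite_lim_seq_incr _ B (fun K => sum_n_incr _ K Hsq) HB) as [l Hl].
  assert (Hs : is_series (fun k => a k ^ 2) l) by exact Hl.
  split; [exists l; exact Hs|].
  unfold nrm. rewrite (is_series_unique _ _ Hs). apply sqrt_le_1_alt.
  exact (is_lim_seq_le _ _ l B HB Hl (is_lim_seq_const B)).
Qed.

Lemma partial_sum_le_nrm (a : vec) K : l2 a -> sum_n (fun k => a k ^ 2) K <= nrm a ^ 2.
Proof.
  intros Ha.
  assert (Hsq : forall k, 0 <= a k ^ 2) by (intros; apply pow2_ge_0).
  unfold nrm. rewrite pow2_sqrt.
  - now apply partial_sum_le_Series.
  - apply (Rle_trans _ (sum_n (fun k => a k ^ 2) 0)).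
    + now apply sum_n_nonneg.
    + now apply partial_sum_le_Series.
Qed.

Lemma l2_minus (a b : vec) : l2 a -> l2 b -> l2 (fun k => a k - b k).
Proof.
  intros Ha Hb.
  apply (@ex_series_le R_AbsRing R_CompleteNormedModule _ (fun k => 2 * a k ^ 2 + 2 * b k ^ 2)).
  - intros k. change norm with Rabs. rewrite Rabs_pos_eq by apply pow2_ge_0.
    pose proof (pow2_ge_0 (a k + b k)). nra.
  - apply (@ex_series_plus R_AbsRing R_NormedModule);
      now apply (@ex_series_scal_l R_AbsRing R_NormedModule).
Qed.

Lemma l2_Qproj M (a : vec) : l2 a -> l2 (Qproj M a).
Proof.
  intros Ha. apply (@ex_series_le R_AbsRing R_CompleteNormedModule _ (fun k => a k ^ 2)); [|exact Ha].
  intros k. change norm with Rabs. unfold Qproj. destruct (k <? M)%nat.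
  - rewrite pow_i, Rabs_R0 by lia. apply pow2_ge_0.
  - rewrite Rabs_pos_eq by apply pow2_ge_0. lra.
Qed.

Lemma l2_of_l2_Qproj M (a : vec) : l2 (Qproj M a) -> l2 a.
Proof.
  unfold l2. intros H. apply (ex_series_incr_n _ M). apply (ex_series_incr_n _ M) in H.
  revert H. apply ex_series_ext. intros k. unfold Qproj.
  replace (M + k <? M)%nat with false; [reflexivity|]. symmetry. apply Nat.ltb_ge. lia.
Qed.

Lemma nrm_nonneg (a : vec) : 0 <= nrm a.
Proof. apply sqrt_pos. Qed.

Lemma coord_le_nrm (a : vec) k : l2 a -> Rabs (a k) <= nrm a.
Proof.
  intros Ha. rewrite <- (sqrt_pow2 (Rabs (a k))) by apply Rabs_pos. rewrite pow2_abs.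
  apply sqrt_le_1_alt. eapply Rle_trans.
  - apply (term_le_sum_n (fun i => a i ^ 2)). intros; apply pow2_ge_0.
  - apply partial_sum_le_Series; [intros; apply pow2_ge_0 | exact Ha].
Qed.

Lemma coord_le_vdist (a b : vec) k : l2 a -> l2 b -> Rabs (a k - b k) <= vdist a b.
Proof. intros Ha Hb. exact (coord_le_nrm _ k (l2_minus a b Ha Hb)). Qed.

Lemma l2_limit (v : nat -> vec) (u : vec) C :
  (forall k, is_lim_seq (fun j => v j k) (u k)) ->
  eventually (fun j => l2 (v j) /\ nrm (v j) <= C) -> l2 u /\ nrm u <= C.
Proof.
  intros Hcv Hev.
  assert (HC : 0 <= C).
  { destruct Hev as [J HJ]. destruct (HJ J (le_n J)) as [_ H]. pose proof (nrm_nonneg (v J)). lra. }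
  rewrite <- (sqrt_pow2 C HC). apply l2_of_partial_sums. intros K.
  assert (Hsum := is_lim_seq_sum_n (fun j k => v j k ^ 2) (fun k => u k ^ 2) K
    (fun k => is_lim_seq_mult' _ _ _ _ (Hcv k) (is_lim_seq_mult' _ _ _ _ (Hcv k) (is_lim_seq_const 1)))).
  refine (is_lim_seq_le_loc _ _ _ (C ^ 2) _ Hsum (is_lim_seq_const _)).
  revert Hev. apply filter_imp. intros j [Hl2 Hnrm].
  eapply Rle_trans; [now apply partial_sum_le_nrm|]. apply pow_incr. split; [apply nrm_nonneg | exact Hnrm].
Qed.

Lemma vdist_le_head_tail (p q : vec) M c tau :
  l2 p -> l2 q -> 0 <= c ->
  (forall k, (k < M)%nat -> Rabs (p k - q k) <= c) ->
  nrm (Qproj M p) <= tau -> nrm (Qproj M q) <= tau ->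
  vdist p q <= INR M * c + 2 * tau.
Proof.
  intros Hp Hq Hc Hhead Htp Htq.
  assert (Htau : 0 <= tau) by (pose proof (nrm_nonneg (Qproj M p)); lra).
  assert (HM : INR M <= INR M ^ 2).
  { destruct M as [|M]; [simpl; lra|]. assert (1 <= INR (S M)) by (apply (le_INR 1); lia). nra. }
  unfold vdist. rewrite <- (sqrt_pow2 (INR M * c + 2 * tau)) by (pose proof (pos_INR M); nra).
  apply l2_of_partial_sums. intros K.
  apply (Rle_trans _ (sum_n (fun k => (if (k <? M)%nat then c ^ 2 else 0)
                       + (2 * Qproj M p k ^ 2 + 2 * Qproj M q k ^ 2)) K)).
  - apply sum_n_le_R. intros k. unfold Qproj. destruct (k <? M)%nat eqn:E.
    + apply Nat.ltb_lt in E. specialize (Hhead k E). rewrite <- pow2_abs.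
      pose proof (Rabs_pos (p k - q k)). simpl. nra.
    + pose proof (pow2_ge_0 (p k + q k)). nra.
  - rewrite !sum_n_plus_R, !sum_n_mult_l_R.
    assert (Htail : forall a, l2 a -> nrm (Qproj M a) <= tau ->
              sum_n (fun k => Qproj M a k ^ 2) K <= tau ^ 2).
    { intros a Ha Hta. eapply Rle_trans; [apply partial_sum_le_nrm, l2_Qproj, Ha|].
      apply pow_incr. split; [apply nrm_nonneg | exact Hta]. }
    apply (Rle_trans _ (INR M * c ^ 2 + (2 * tau ^ 2 + 2 * tau ^ 2))).
    + apply Rplus_le_compat; [apply sum_n_indicator_le, pow2_ge_0|].
      apply Rplus_le_compat; apply Rmult_le_compat_l; try lra; now apply Htail.
    + assert (INR M * c ^ 2 <= INR M ^ 2 * c ^ 2) by (apply Rmult_le_compat_r; [apply pow2_ge_0 | exact HM]).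
      assert (0 <= INR M * c * tau) by (pose proof (pos_INR M); apply Rmult_le_pos; [apply Rmult_le_pos|]; lra).
      replace ((INR M * c + 2 * tau) ^ 2) with (INR M ^ 2 * c ^ 2 + 4 * (INR M * c * tau) + 4 * tau ^ 2) by ring.
      lra.
Qed.

(** * Subsequences *)

Definition strictly_increasing (phi : nat -> nat) : Prop := forall i, (phi i < phi (S i))%nat.

Lemma strictly_increasing_lt phi :
  strictly_increasing phi -> forall i k, (i < k)%nat -> (phi i < phi k)%nat.
Proof. intros H i k Hik. induction Hik as [|k _ IH]; [apply H|]. specialize (H k). lia. Qed.

Lemma strictly_increasing_ge phi : strictly_increasing phi -> forall i, (i <= phi i)%nat.
Proof. intros H i. induction i as [|i IH]; [lia|]. specialize (H i). lia. Qed.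

Lemma strictly_increasing_comp phi psi :
  strictly_increasing phi -> strictly_increasing psi -> strictly_increasing (fun i => phi (psi i)).
Proof. intros Hphi Hpsi i. now apply strictly_increasing_lt. Qed.

Definition eventually_bounded (b : nat -> R) : Prop := exists B, eventually (fun j => Rabs (b j) <= B).

Lemma eventually_bounded_subseq (b : nat -> R) (psi : nat -> nat) :
  (forall i, (i <= psi i)%nat) -> eventually_bounded b -> eventually_bounded (fun i => b (psi i)).
Proof.
  intros Hpsi [B [J HJ]]. exists B, J. intros i Hi. apply HJ. specialize (Hpsi i). lia.
Qed.

Lemma cluster_point_subseq (b : nat -> R) (L : R) :
  (forall (eps : posreal) N, exists n, (N <= n)%nat /\ Rabs (b n - L) < eps) ->
  exists psi, strictly_increasing psi /\ is_lim_seq (fun i => b (psi i)) L.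
Proof.
  intros H.
  destruct (choice (fun (iN : nat * nat) n => (snd iN <= n)%nat /\ Rabs (b n - L) < / (INR (fst iN) + 1)))
    as [pick Hpick].
  { intros [i N]. exact (H (mkposreal _ (RinvN_pos i)) N). }
  pose (psi := fix psi i := match i with O => pick (O, O) | S i' => pick (S i', S (psi i')) end).
  assert (Hb : forall i, Rabs (b (psi i) - L) < / (INR i + 1)) by (intros [|i]; apply Hpick).
  exists psi. split.
  - intros i. exact (proj1 (Hpick (S i, S (psi i)))).
  - apply is_lim_seq_spec. intros eps.
    destruct (archimed_cor1 eps (cond_pos eps)) as [n0 [Hn0 Hn0pos]].
    exists n0. intros i Hi. eapply Rlt_le_trans; [apply Hb|].
    apply Rlt_le, (Rle_lt_trans _ (/ INR n0)); [|exact Hn0].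
    apply Rinv_le_contravar; [apply lt_0_INR; lia|]. apply le_INR in Hi. lra.
Qed.

Lemma subseq_cv_of_bounded (b : nat -> R) :
  exists psi, strictly_increasing psi /\
    (eventually_bounded b -> ex_finite_lim_seq (fun i => b (psi i))).
Proof.
  destruct (ex_LimSup_seq b) as [[L| |] HL].
  - destruct (cluster_point_subseq b L) as [psi [Hpsi Hcv]].
    + intros eps N. destruct (HL eps) as [Hinf [N0 Hsup]].
      destruct (Hinf (Nat.max N N0)) as [n [Hn Hlow]]. exists n. split; [lia|].
      specialize (Hsup n ltac:(lia)). apply Rabs_lt_between'. lra.
    + exists psi. split; [exact Hpsi|]. intros _. now exists L.
  - exists (fun i => i). split; [intros i; lia|]. intros [B [J HB]]. exfalso.
    destruct (HL B J) as [n [Hn Hbig]]. specialize (HB n Hn). apply Rabs_le_between in HB. lra.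
  - exists (fun i => i). split; [intros i; lia|]. intros [B [J HB]]. exfalso.
    destruct (HL (- B - 1)) as [N0 HN0]. specialize (HN0 (Nat.max N0 J) ltac:(lia)).
    specialize (HB (Nat.max N0 J) ltac:(lia)). apply Rabs_le_between in HB. lra.
Qed.

Fixpoint nested_subseq (sel : (nat -> R) -> nat -> nat) (a : nat -> nat -> R) (m : nat) : nat -> nat :=
  match m with
  | O => sel (a O)
  | S m' => fun i => nested_subseq sel a m' (sel (fun i => a (S m') (nested_subseq sel a m' i)) i)
  end.

(* Cantor's diagonal process: from index [m] on, [fun j => Phi j j] runs inside the [m]-th nested
   subsequence. *)
Lemma diagonal_subseq (a : nat -> nat -> R) :
  (forall m, eventually_bounded (a m)) ->
  exists phi, strictly_increasing phi /\ forall m, ex_finite_lim_seq (fun j => a m (phi j)).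
Proof.
  intros Hbd. destruct (choice _ subseq_cv_of_bounded) as [sel Hsel].
  set (Phi := nested_subseq sel a).
  assert (HPhi : forall m, strictly_increasing (Phi m)).
  { induction m as [|m IH]; [apply Hsel|]. exact (strictly_increasing_comp _ _ IH (proj1 (Hsel _))). }
  assert (Hcv : forall m, ex_finite_lim_seq (fun i => a m (Phi m i))).
  { intros [|m]; [exact (proj2 (Hsel _) (Hbd 0%nat))|].
    exact (proj2 (Hsel _) (eventually_bounded_subseq _ _ (strictly_increasing_ge _ (HPhi m)) (Hbd (S m)))). }
  assert (Hnest : forall p m, exists sigma, (forall i, (i <= sigma i)%nat) /\
                                            forall i, Phi (p + m)%nat i = Phi m (sigma i)).
  { induction p as [|p IH]; intros m; [exists (fun i => i); split; auto|].
    destruct (IH m) as [sigma [Hsigma E]].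
    pose proof (proj1 (Hsel (fun i => a (S (p + m)) (Phi (p + m)%nat i)))) as Hs.
    exists (fun i => sigma (sel (fun i => a (S (p + m)) (Phi (p + m)%nat i)) i)). split.
    - intros i. pose proof (strictly_increasing_ge _ Hs i).
      specialize (Hsigma (sel (fun i => a (S (p + m)) (Phi (p + m)%nat i)) i)). lia.
    - intros i. apply E. }
  exists (fun j => Phi j j). split.
  - intros j. change (Phi j j < Phi j (sel (fun i => a (S j) (Phi j i)) (S j)))%nat.
    apply (strictly_increasing_lt _ (HPhi j)).
    pose proof (strictly_increasing_ge _ (proj1 (Hsel (fun i => a (S j) (Phi j i)))) (S j)). lia.
  - intros m. destruct (Hcv m) as [l Hl]. exists l.
    apply is_lim_seq_spec. apply is_lim_seq_spec in Hl. intros eps.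
    destruct (Hl eps) as [N0 HN0]. exists (Nat.max N0 m). intros j Hj.
    destruct (Hnest (j - m)%nat m) as [sigma [Hsigma E]].
    replace (j - m + m)%nat with j in E by lia. rewrite E. apply HN0. specialize (Hsigma j). lia.
Qed.

Lemma eventually_forall_lt (P : nat -> nat -> Prop) n :
  (forall i, (i < n)%nat -> eventually (P i)) ->
  eventually (fun j => forall i, (i < n)%nat -> P i j).
Proof.
  induction n as [|n IH]; intros H.
  - apply filter_forall. intros j i Hi. lia.
  - apply (filter_imp (fun j => (forall i, (i < n)%nat -> P i j) /\ P n j)).
    + intros j [Hlt Hn] i Hi. destruct (Nat.eq_dec i n) as [->|Hne]; [exact Hn|]. apply Hlt. lia.
    + apply filter_and; [apply IH; intros i Hi|]; apply H; lia.
Qed.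

Lemma finite_upper_bound (f : nat -> R) n : exists B, forall k, (k < n)%nat -> f k <= B.
Proof.
  induction n as [|n [B HB]]; [exists 0; intros; lia|].
  exists (Rmax B (f n)). intros k Hk. destruct (Nat.eq_dec k n) as [->|Hne]; [apply Rmax_r|].
  eapply Rle_trans; [apply HB; lia | apply Rmax_l].
Qed.

Definition grid (i q : nat) : R := - (INR i / (INR q + 1)).

Lemma grid_approx T0 q t : - T0 <= t <= 0 ->
  exists i, INR i <= T0 * (INR q + 1) /\ t <= grid i q <= 0 /\ grid i q - t < / (INR q + 1).
Proof.
  intros Ht. assert (Hq : 0 < INR q + 1) by (pose proof (pos_INR q); lra).
  destruct (nfloor_ex (- t * (INR q + 1))) as [i [Hi1 Hi2]]; [nra|].
  exists i. unfold grid. split; [nra|]. pose proof (pos_INR i).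
  repeat split.
  - apply (Rmult_le_reg_r (INR q + 1)); [exact Hq|]. field_simplify; lra.
  - assert (0 <= INR i / (INR q + 1)) by (apply Rdiv_le_0_compat; lra). lra.
  - apply (Rmult_lt_reg_r (INR q + 1)); [exact Hq|]. field_simplify; lra.
Qed.

Lemma grid_lipschitz_uniformly_cauchy (g : nat -> R -> R) T0 L :
  0 <= L ->
  eventually (fun j => forall s t, - T0 <= s <= 0 -> - T0 <= t <= 0 ->
                         Rabs (g j t - g j s) <= L * Rabs (t - s)) ->
  (forall i q, ex_finite_lim_seq (fun j => g j (grid i q))) ->
  forall eps, 0 < eps -> exists J, forall j j' t, (J <= j)%nat -> (J <= j')%nat -> - T0 <= t <= 0 ->
    Rabs (g j t - g j' t) < eps.
Proof.
  intros HL Hlip Hgrid eps Heps.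
  destruct (archimed_cor1 (eps / (3 * (L + 1)))) as [q [Hq Hq0]]; [apply Rdiv_lt_0_compat; lra|].
  assert (Hmesh : L * / (INR q + 1) < eps / 3).
  { assert (HqR : 0 < INR q) by (apply lt_0_INR; lia).
    apply (Rle_lt_trans _ (L * (eps / (3 * (L + 1))))).
    - apply Rmult_le_compat_l; [exact HL|]. apply Rlt_le, (Rle_lt_trans _ (/ INR q)); [|exact Hq].
      apply Rinv_le_contravar; lra.
    - apply (Rmult_lt_reg_r (3 * (L + 1))); [lra|]. field_simplify; nra. }
  destruct (INR_unbounded (T0 * (INR q + 1))) as [I HI].
  assert (Hlim : forall i, exists l : R, is_lim_seq (fun j => g j (grid i q)) l) by (intros; apply Hgrid).
  destruct (choice _ Hlim) as [l Hl].
  assert (Hnear : eventually (fun j => (forall i, (i < I)%nat -> Rabs (g j (grid i q) - l i) < eps / 6) /\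
                    forall s t, - T0 <= s <= 0 -> - T0 <= t <= 0 -> Rabs (g j t - g j s) <= L * Rabs (t - s))).
  { apply filter_and; [|exact Hlip]. apply eventually_forall_lt. intros i _.
    exact (proj2 (is_lim_seq_spec _ _) (Hl i) (mkposreal (eps / 6) ltac:(lra))). }
  destruct Hnear as [J HJ]. exists J. intros j j' t Hj Hj' Ht.
  destruct (grid_approx T0 q t Ht) as [i [HiI [Hd Hdt]]].
  assert (Hi : (i < I)%nat) by (apply INR_lt; lra).
  set (d := grid i q) in *.
  assert (Hdom : - T0 <= d <= 0) by lra.
  destruct (HJ j Hj) as [Hg Hlj]. destruct (HJ j' Hj') as [Hg' Hlj'].
  specialize (Hg i Hi). specialize (Hg' i Hi). fold d in Hg, Hg'.
  specialize (Hlj d t Hdom Ht). specialize (Hlj' t d Ht Hdom).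
  rewrite (Rabs_minus_sym t d) in Hlj. rewrite (Rabs_pos_eq (d - t)) in Hlj, Hlj' by lra.
  assert (Hdist : L * (d - t) <= L * / (INR q + 1)) by (apply Rmult_le_compat_l; lra).
  rewrite Rabs_minus_sym in Hg'.
  replace (g j t - g j' t) with ((g j t - g j d) + (g j d - l i) + (l i - g j' d) + (g j' d - g j' t)) by ring.
  pose proof (Rabs_triang (g j t - g j d + (g j d - l i) + (l i - g j' d)) (g j' d - g j' t)).
  pose proof (Rabs_triang (g j t - g j d + (g j d - l i)) (l i - g j' d)).
  pose proof (Rabs_triang (g j t - g j d) (g j d - l i)).
  lra.
Qed.

Lemma uniformly_cauchy_cv (g : nat -> R -> R) (D : R -> Prop) :
  (forall eps, 0 < eps -> exists J, forall j j' t, (J <= j)%nat -> (J <= j')%nat -> D t ->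
     Rabs (g j t - g j' t) < eps) ->
  forall eps, 0 < eps -> exists J, forall j t, (J <= j)%nat -> D t ->
    Rabs (g j t - real (Lim_seq (fun j => g j t))) < eps.
Proof.
  intros Hcauchy eps Heps. destruct (Hcauchy (eps / 2)) as [J HJ]; [lra|].
  exists J. intros j t Hj Ht.
  assert (Hex : ex_finite_lim_seq (fun j => g j t)).
  { apply ex_lim_seq_cauchy_corr. intros e. destruct (Hcauchy e (cond_pos e)) as [J' HJ'].
    exists J'. intros n m Hn Hm. now apply HJ'. }
  destruct Hex as [l Hl]. rewrite (is_lim_seq_unique _ _ Hl). simpl.
  assert (Hle : Rabs (g j t - l) <= eps / 2).
  { apply (is_lim_seq_le_loc (fun j' => Rabs (g j t - g j' t)) (fun _ => eps / 2)
                             (Rabs (g j t - l)) (eps / 2)).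
    - exists J. intros j' Hj'. apply Rlt_le. now apply HJ.
    - apply (is_lim_seq_abs _ (Finite (g j t - l))).
      apply (is_lim_seq_minus' _ _ (g j t) l); [apply is_lim_seq_const | exact Hl].
    - apply is_lim_seq_const. }
  lra.
Qed.

(** * Riemann integrals *)

Lemma exp_le x y : x <= y -> exp x <= exp y.
Proof. intros [H|H]; [left; now apply exp_increasing | rewrite H; lra]. Qed.

Definition continuous_within_Icc (a b : R) (g : R -> R) : Prop :=
  forall t, a <= t <= b -> forall eps, 0 < eps -> exists delta, 0 < delta /\
    forall s, a <= s <= b -> Rabs (s - t) < delta -> Rabs (g s - g t) < eps.

Definition clamp (a b x : R) : R := Rmax a (Rmin b x).

Lemma clamp_id a b x : a <= x <= b -> clamp a b x = x.
Proof. intros H. unfold clamp, Rmax, Rmin. repeat destruct Rle_dec; lra. Qed.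

Lemma clamp_in a b x : a <= b -> a <= clamp a b x <= b.
Proof. intros H. unfold clamp, Rmax, Rmin. repeat destruct Rle_dec; lra. Qed.

Lemma clamp_lipschitz a b x y : a <= b -> Rabs (clamp a b x - clamp a b y) <= Rabs (x - y).
Proof.
  intros H. unfold clamp, Rmax, Rmin. repeat destruct Rle_dec;
    apply Rabs_le_between'; unfold Rabs; destruct Rcase_abs; lra.
Qed.

Lemma continuous_clamp a b g : a <= b -> continuous_within_Icc a b g ->
  forall x, continuous (fun t => g (clamp a b t)) x.
Proof.
  intros Hab Hg x. apply continuity_pt_filterlim. intros eps Heps.
  destruct (Hg (clamp a b x) (clamp_in a b x Hab) eps Heps) as [d [Hd H]].
  exists d. split; [exact Hd|]. intros y [_ Hy]. apply H; [now apply clamp_in|].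
  eapply Rle_lt_trans; [now apply clamp_lipschitz | exact Hy].
Qed.

Lemma ex_RInt_within_Icc (g c phi : R -> R) a b : a <= b -> continuous_within_Icc a b g ->
  (forall x, continuous c x) -> (forall y, continuous phi y) ->
  ex_RInt (fun x => c x * phi (g x)) a b.
Proof.
  intros Hab Hg Hc Hphi.
  apply (ex_RInt_ext (fun x => c x * phi (g (clamp a b x)))).
  { intros x Hx. rewrite Rmin_left, Rmax_right in Hx by lra. now rewrite clamp_id by lra. }
  apply (@ex_RInt_continuous R_CompleteNormedModule). intros z _.
  apply (@continuous_mult R_UniformSpace R_AbsRing); [apply Hc|].
  apply (continuous_comp (fun x => g (clamp a b x)) phi); [now apply continuous_clamp | apply Hphi].
Qed.

Lemma continuous_exp_decay l t x : continuous (fun s => exp (- l * (t - s))) x.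
Proof. apply (@ex_derive_continuous R_AbsRing R_NormedModule). auto_derive. auto. Qed.

Lemma RInt_exp_decay_le l s t : 0 < l -> s <= t -> RInt (fun x => exp (- l * (t - x))) s t <= / l.
Proof.
  intros Hl Hst.
  assert (Hint : is_RInt (fun x => exp (- l * (t - x))) s t ((1 - exp (- l * (t - s))) / l)).
  { replace ((1 - exp (- l * (t - s))) / l)
      with (minus (exp (- l * (t - t)) / l) (exp (- l * (t - s)) / l)).
    - apply (is_RInt_derive (fun x => exp (- l * (t - x)) / l)).
      + intros x _. auto_derive; [auto|]. replace (t + - x) with (t - x) by ring. field. lra.
      + intros x _. apply continuous_exp_decay.
    - unfold minus, plus, opp; simpl. replace (- l * (t - t)) with 0 by ring. rewrite exp_0. field. lra. }
  rewrite (is_RInt_unique _ _ _ _ Hint). pose proof (exp_pos (- l * (t - s))).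
  unfold Rdiv. rewrite <- (Rmult_1_l (/ l)) at 2.
  apply Rmult_le_compat_r; [left; now apply Rinv_0_lt_compat|]. lra.
Qed.

Lemma discriminant_le A B C : 0 <= A -> (forall r, 0 <= C - 2 * r * B + r ^ 2 * A) -> B ^ 2 <= A * C.
Proof.
  intros HA H. destruct (Rle_lt_or_eq_dec 0 A HA) as [HA'|<-].
  - specialize (H (B / A)).
    replace (C - 2 * (B / A) * B + (B / A) ^ 2 * A) with ((A * C - B ^ 2) / A) in H by (field; lra).
    assert (0 <= A * C - B ^ 2); [|lra].
    replace (A * C - B ^ 2) with (((A * C - B ^ 2) / A) * A) by (field; lra). apply Rmult_le_pos; lra.
  - destruct (Req_dec B 0) as [->|HB]; [specialize (H 0); lra|].
    specialize (H ((C + 1) / (2 * B))).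
    replace (C - 2 * ((C + 1) / (2 * B)) * B + ((C + 1) / (2 * B)) ^ 2 * 0) with (-1) in H by (field; auto).
    lra.
Qed.

Lemma RInt_Cauchy_Schwarz a b (w f : R -> R) : a <= b -> (forall x, a < x < b -> 0 <= w x) ->
  ex_RInt w a b -> ex_RInt (fun x => w x * f x) a b -> ex_RInt (fun x => w x * f x ^ 2) a b ->
  (RInt (fun x => w x * f x) a b) ^ 2 <= RInt w a b * RInt (fun x => w x * f x ^ 2) a b.
Proof.
  intros Hab Hw Ew Ewf Ewf2. apply discriminant_le; [now apply RInt_ge_0|]. intros r.
  pose proof (is_RInt_plus (V := R_NormedModule) _ _ a b _ _
    (is_RInt_minus (V := R_NormedModule) _ _ a b _ _ (RInt_correct _ _ _ Ewf2)
       (is_RInt_scal (V := R_NormedModule) _ a b (2 * r) _ (RInt_correct _ _ _ Ewf)))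
    (is_RInt_scal (V := R_NormedModule) _ a b (r ^ 2) _ (RInt_correct _ _ _ Ew))) as Hcomb.
  apply (is_RInt_ge_0 _ _ _ _ Hab Hcomb). intros x Hx. specialize (Hw x Hx).
  change (0 <= w x * f x ^ 2 - 2 * r * (w x * f x) + r ^ 2 * w x).
  pose proof (pow2_ge_0 (f x - r)). nra.
Qed.

Lemma RInt_sum_n (g : nat -> R -> R) a b K : (forall k, ex_RInt (g k) a b) ->
  ex_RInt (fun x => sum_n (fun k => g k x) K) a b /\
  RInt (fun x => sum_n (fun k => g k x) K) a b = sum_n (fun k => RInt (g k) a b) K.
Proof.
  intros H. induction K as [|K [IH1 IH2]].
  - rewrite sum_O. split.
    + apply (ex_RInt_ext (g 0%nat)); [intros; now rewrite sum_O | apply H].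
    + apply RInt_ext. intros; now rewrite sum_O.
  - assert (E : forall x, sum_n (fun k => g k x) (S K) = sum_n (fun k => g k x) K + g (S K) x)
      by (intros; apply sum_Sn_R).
    rewrite sum_Sn_R. split.
    + apply (ex_RInt_ext (fun x => sum_n (fun k => g k x) K + g (S K) x)); [intros; now rewrite E|].
      now apply (ex_RInt_plus (V := R_NormedModule)).
    + rewrite (RInt_ext _ (fun x => sum_n (fun k => g k x) K + g (S K) x)) by (intros; apply E).
      transitivity (RInt (fun x => sum_n (fun k => g k x) K) a b + RInt (g (S K)) a b).
      * exact (RInt_plus (V := R_CompleteNormedModule) _ _ _ _ IH1 (H (S K))).
      * f_equal. exact IH2.
Qed.

(** * Mild solutions *)

Section MildSolution.

Variables (lam : nat -> R) (F : vec -> vec) (K0 K1 : R).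
Hypothesis hlam0 : 0 < lam 0%nat.
Hypothesis hlam_mono : forall k, lam k <= lam (S k).
Hypothesis hK1 : 0 < K1.
Hypothesis hFl2 : forall v, l2 v -> l2 (F v).
Hypothesis hFbnd : forall v, l2 v -> nrm (F v) <= K0.
Hypothesis hFlip : forall v w, l2 v -> l2 w -> vdist (F v) (F w) <= K1 * vdist v w.

Lemma lam_le i k : (i <= k)%nat -> lam i <= lam k.
Proof. intros H. induction H as [|k _ IH]; [lra|]. specialize (hlam_mono k). lra. Qed.

Lemma lam_pos k : 0 < lam k.
Proof. pose proof (lam_le 0 k ltac:(lia)). lra. Qed.

Lemma Fcoord_bound v k : l2 v -> Rabs (F v k) <= K0.
Proof. intros Hv. eapply Rle_trans; [apply coord_le_nrm, hFl2, Hv | apply hFbnd, Hv]. Qed.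

Lemma Fcoord_lipschitz v w k : l2 v -> l2 w -> Rabs (F v k - F w k) <= K1 * vdist v w.
Proof. intros Hv Hw. eapply Rle_trans; [apply coord_le_vdist; now apply hFl2 | now apply hFlip]. Qed.

Lemma Fcoord_continuous_within (J : R -> Prop) (v : R -> vec) k s t :
  H_continuous_on J v -> (forall tau, s <= tau <= t -> J tau) ->
  continuous_within_Icc s t (fun tau => F (v tau) k).
Proof.
  intros [Hl2 Hc] HJ tau Htau eps Heps.
  destruct (Hc tau (HJ tau Htau) (eps / K1)) as [d [Hd H]]; [apply Rdiv_lt_0_compat; lra|].
  exists d. split; [exact Hd|]. intros s' Hs' Hst.
  eapply Rle_lt_trans; [apply Fcoord_lipschitz; apply Hl2, HJ; assumption|].
  specialize (H s' (HJ s' Hs') Hst). apply (Rmult_lt_compat_l K1) in H; [|lra].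
  replace (K1 * (eps / K1)) with eps in H by (field; lra). exact H.
Qed.

Lemma ex_RInt_Fcoord (J : R -> Prop) (v : R -> vec) k s t l (phi : R -> R) :
  H_continuous_on J v -> (forall tau, s <= tau <= t -> J tau) -> s <= t ->
  (forall y, continuous phi y) ->
  ex_RInt (fun tau => exp (- l * (t - tau)) * phi (F (v tau) k)) s t.
Proof.
  intros Hv HJ Hst Hphi. apply (ex_RInt_within_Icc (fun tau => F (v tau) k)); try assumption.
  - now apply (Fcoord_continuous_within J).
  - intros; apply continuous_exp_decay.
Qed.

Lemma RInt_Fcoord_bound (J : R -> Prop) (v : R -> vec) k s t :
  H_continuous_on J v -> (forall tau, s <= tau <= t -> J tau) -> s <= t ->
  Rabs (RInt (fun tau => exp (- lam k * (t - tau)) * F (v tau) k) s t) <= (t - s) * K0.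
Proof.
  intros Hv HJ Hst.
  apply abs_RInt_le_const; [exact Hst | exact (ex_RInt_Fcoord J v k s t _ _ Hv HJ Hst continuous_id)|].
  intros tau Htau. rewrite Rabs_mult, Rabs_pos_eq by (left; apply exp_pos).
  assert (exp (- lam k * (t - tau)) <= 1) by (rewrite <- exp_0; apply exp_le; pose proof (lam_pos k); nra).
  pose proof (Fcoord_bound (v tau) k (proj1 Hv tau (HJ tau Htau))).
  pose proof (Rabs_pos (F (v tau) k)). pose proof (exp_pos (- lam k * (t - tau))). nra.
Qed.

Lemma RInt_Fcoord_diff (J : R -> Prop) (v w : R -> vec) k s t delta :
  H_continuous_on J v -> H_continuous_on J w -> (forall tau, s <= tau <= t -> J tau) -> s <= t ->
  (forall tau, s <= tau <= t -> vdist (v tau) (w tau) <= delta) ->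
  Rabs (RInt (fun tau => exp (- lam k * (t - tau)) * F (v tau) k) s t
        - RInt (fun tau => exp (- lam k * (t - tau)) * F (w tau) k) s t) <= (t - s) * (K1 * delta).
Proof.
  intros Hv Hw HJ Hst Hvw.
  pose proof (is_RInt_minus (V := R_NormedModule) _ _ s t _ _
    (RInt_correct _ _ _ (ex_RInt_Fcoord J v k s t (lam k) _ Hv HJ Hst continuous_id))
    (RInt_correct _ _ _ (ex_RInt_Fcoord J w k s t (lam k) _ Hw HJ Hst continuous_id))) as Hdiff.
  assert (E : RInt (fun tau => exp (- lam k * (t - tau)) * F (v tau) k
                               - exp (- lam k * (t - tau)) * F (w tau) k) s t
              = RInt (fun tau => exp (- lam k * (t - tau)) * F (v tau) k) s t
                - RInt (fun tau => exp (- lam k * (t - tau)) * F (w tau) k) s t)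
    by exact (is_RInt_unique _ _ _ _ Hdiff).
  rewrite <- E. apply abs_RInt_le_const; [exact Hst | eexists; exact Hdiff|]. intros tau Htau.
  rewrite <- Rmult_minus_distr_l, Rabs_mult, Rabs_pos_eq by (left; apply exp_pos).
  assert (exp (- lam k * (t - tau)) <= 1) by (rewrite <- exp_0; apply exp_le; pose proof (lam_pos k); nra).
  pose proof (Fcoord_lipschitz (v tau) (w tau) k (proj1 Hv tau (HJ tau Htau)) (proj1 Hw tau (HJ tau Htau))).
  pose proof (Rmult_le_compat_l K1 _ _ (Rlt_le _ _ hK1) (Hvw tau Htau)).
  pose proof (Rabs_pos (F (v tau) k - F (w tau) k)). pose proof (exp_pos (- lam k * (t - tau))). nra.
Qed.

Lemma partial_sum_Qproj_F_le w M K : l2 w -> sum_n (fun k => Qproj M (F w) k ^ 2) K <= K0 ^ 2.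
Proof.
  intros Hw. apply (Rle_trans _ (sum_n (fun k => F w k ^ 2) K)).
  - apply sum_n_le_R. intros k. unfold Qproj. destruct (k <? M)%nat; [|lra].
    pose proof (pow2_ge_0 (F w k)). simpl. lra.
  - eapply Rle_trans; [apply partial_sum_le_nrm, hFl2, Hw|].
    apply pow_incr. split; [apply nrm_nonneg | apply hFbnd, Hw].
Qed.

Lemma mild_solution_shift T (U : R -> vec) :
  mild_solution lam F (fun s => 0 <= s <= T) U ->
  mild_solution lam F (fun s => - T <= s <= 0) (fun t => U (t + T)).
Proof.
  intros [[Hl2 Hc] Hform]. split; [split|].
  - intros t Ht. apply Hl2. lra.
  - intros t Ht eps He. destruct (Hc (t + T) ltac:(lra) eps He) as [d [Hd H]].
    exists d. split; [exact Hd|]. intros s Hs Hst. apply H; [lra|].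
    now replace (s + T - (t + T)) with (s - t) by ring.
  - intros s t Hs Ht Hst k. rewrite (Hform (s + T) (t + T)) by lra.
    replace (t + T - (s + T)) with (t - s) by ring. f_equal.
    assert (Hlin := RInt_comp_lin (fun tau => exp (- lam k * (t + T - tau)) * F (U tau) k) 1 T s t).
    replace (1 * s + T) with (s + T) in Hlin by ring. replace (1 * t + T) with (t + T) in Hlin by ring.
    rewrite <- Hlin.
    + apply RInt_ext. intros y _. change (1 * (exp (- lam k * (t + T - (1 * y + T))) * F (U (1 * y + T)) k) =
        exp (- lam k * (t - y)) * F (U (y + T)) k).
      replace (1 * y + T) with (y + T) by ring. replace (t + T - (y + T)) with (t - y) by ring. ring.
    + apply (ex_RInt_Fcoord (fun s => 0 <= s <= T) U k _ _ _ (fun y => y));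
        [split; assumption | intros; lra | lra | apply continuous_id].
Qed.

Section Solution.

Variables (a b : R) (v : R -> vec).
Hypothesis hv : mild_solution lam F (fun s => a <= s <= b) v.

Lemma mild_coord_backward_bound s k : a <= s <= b ->
  Rabs (v s k) <= exp (lam k * (b - s)) * (Rabs (v b k) + K0 * (b - s)).
Proof.
  intros Hs. destruct hv as [Hv Hform].
  pose proof (Hform s b ltac:(lra) ltac:(lra) ltac:(lra) k) as E.
  pose proof (RInt_Fcoord_bound _ v k s b Hv ltac:(intros; lra) ltac:(lra)) as Hint.
  set (I := RInt _ s b) in *.
  assert (Hvs : v s k = exp (lam k * (b - s)) * (v b k - I)).
  { rewrite E. replace (exp (lam k * (b - s)) * (exp (- lam k * (b - s)) * v s k + I - I))
      with (exp (lam k * (b - s) + - lam k * (b - s)) * v s k) by (rewrite exp_plus; ring).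
    replace (lam k * (b - s) + - lam k * (b - s)) with 0 by ring. rewrite exp_0. ring. }
  rewrite Hvs, Rabs_mult, (Rabs_pos_eq (exp _)) by (left; apply exp_pos).
  apply Rmult_le_compat_l; [left; apply exp_pos|].
  pose proof (Rabs_triang (v b k) (- I)). rewrite Rabs_Ropp in H. unfold Rminus. lra.
Qed.

Lemma mild_coord_lipschitz s t k : a <= s -> s <= t -> t <= b ->
  Rabs (v t k - v s k) <= (lam k * Rabs (v s k) + K0) * (t - s).
Proof.
  intros H1 H2 H3. destruct hv as [Hv Hform]. rewrite (Hform s t ltac:(lra) ltac:(lra) H2 k).
  pose proof (RInt_Fcoord_bound _ v k s t Hv ltac:(intros; lra) H2) as Hint.
  set (I := RInt _ s t) in *.
  replace (exp (- lam k * (t - s)) * v s k + I - v s k) with ((exp (- lam k * (t - s)) - 1) * v s k + I) by ring.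
  assert (Hexp : Rabs (exp (- lam k * (t - s)) - 1) <= lam k * (t - s)).
  { pose proof (lam_pos k). pose proof (exp_ineq1_le (- lam k * (t - s))).
    assert (exp (- lam k * (t - s)) <= 1) by (rewrite <- exp_0; apply exp_le; nra).
    rewrite Rabs_left1 by lra. lra. }
  eapply Rle_trans; [apply Rabs_triang|]. rewrite Rabs_mult.
  pose proof (Rabs_pos (v s k)). pose proof (Rabs_pos (exp (- lam k * (t - s)) - 1)). nra.
Qed.

(* Cauchy-Schwarz against the weight [exp (- lam k (t - tau))], then [lam k >= lam M]. *)
Lemma mild_tail_coord M k t : (M <= k)%nat -> v a k = 0 -> a <= t <= b ->
  v t k ^ 2 <= / lam M * RInt (fun tau => exp (- lam M * (t - tau)) * F (v tau) k ^ 2) a t.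
Proof.
  intros HMk Hva Ht. destruct hv as [Hv Hform].
  assert (HJ : forall tau, a <= tau <= t -> a <= tau <= b) by (intros; lra).
  assert (Hsq : forall y, continuous (fun y => y ^ 2) y).
  { intros y. apply (@ex_derive_continuous R_AbsRing R_NormedModule). auto_derive. auto. }
  assert (HlM := lam_pos M). assert (Hlk := lam_le M k HMk).
  assert (Ew : ex_RInt (fun tau => exp (- lam k * (t - tau))) a t)
    by (apply (@ex_RInt_continuous R_CompleteNormedModule); intros; apply continuous_exp_decay).
  pose proof (ex_RInt_Fcoord _ v k a t (lam k) _ Hv HJ ltac:(lra) continuous_id) as Ewf.
  pose proof (ex_RInt_Fcoord _ v k a t (lam k) _ Hv HJ ltac:(lra) Hsq) as Ewf2.
  pose proof (ex_RInt_Fcoord _ v k a t (lam M) _ Hv HJ ltac:(lra) Hsq) as EwMf2.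
  rewrite (Hform a t ltac:(lra) ltac:(lra) ltac:(lra) k), Hva, Rmult_0_r, Rplus_0_l.
  eapply Rle_trans; [apply (RInt_Cauchy_Schwarz a t _ (fun tau => F (v tau) k)); try assumption; try lra|].
  { intros; left; apply exp_pos. }
  apply Rmult_le_compat.
  - apply RInt_ge_0; [lra | exact Ew | intros; left; apply exp_pos].
  - apply RInt_ge_0; [lra | exact Ewf2|]. intros tau _.
    pose proof (exp_pos (- lam k * (t - tau))). pose proof (pow2_ge_0 (F (v tau) k)). nra.
  - eapply Rle_trans; [apply RInt_exp_decay_le; lra|]. apply Rinv_le_contravar; lra.
  - apply RInt_le; [lra | exact Ewf2 | exact EwMf2|]. intros tau Htau.
    apply Rmult_le_compat_r; [apply pow2_ge_0|]. apply exp_le. nra.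
Qed.

Lemma ex_RInt_Qproj_Fcoord_sq M k t : a <= t <= b ->
  ex_RInt (fun tau => exp (- lam M * (t - tau)) * Qproj M (F (v tau)) k ^ 2) a t.
Proof.
  intros Ht.
  apply (ex_RInt_Fcoord _ v k a t (lam M) (fun y => (if (k <? M)%nat then 0 else y) ^ 2) (proj1 hv));
    [intros; lra | lra |].
  intros y. destruct (k <? M)%nat; [apply continuous_const|].
  apply (@ex_derive_continuous R_AbsRing R_NormedModule). auto_derive. auto.
Qed.

Lemma mild_Qproj_coord_sq_le N M k t : (N <= M)%nat -> Qproj N (v a) = (fun _ => 0) -> a <= t <= b ->
  Qproj M (v t) k ^ 2 <= / lam M * RInt (fun tau => exp (- lam M * (t - tau)) * Qproj M (F (v tau)) k ^ 2) a t.
Proof.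
  intros HNM HQ Ht. pose proof (lam_pos M) as HlM. unfold Qproj at 1. destruct (k <? M)%nat eqn:E.
  - apply (Rle_trans _ 0); [simpl; lra|].
    apply Rmult_le_pos; [left; now apply Rinv_0_lt_compat|].
    apply RInt_ge_0; [lra | now apply ex_RInt_Qproj_Fcoord_sq |]. intros tau _.
    pose proof (exp_pos (- lam M * (t - tau))). pose proof (pow2_ge_0 (Qproj M (F (v tau)) k)). nra.
  - apply Nat.ltb_ge in E.
    rewrite (RInt_ext _ (fun tau => exp (- lam M * (t - tau)) * F (v tau) k ^ 2))
      by (intros; unfold Qproj; now replace (k <? M)%nat with false by (symmetry; apply Nat.ltb_ge; lia)).
    apply mild_tail_coord; [exact E | | exact Ht].
    assert (Hk := f_equal (fun f => f k) HQ). simpl in Hk. unfold Qproj in Hk.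
    now replace (k <? N)%nat with false in Hk by (symmetry; apply Nat.ltb_ge; lia).
Qed.

(* Summing the coordinate estimates, the weight [exp (- lam M (t - tau))] integrates to at most
   [/ lam M] against [|F|^2 <= K0^2]. *)
Lemma mild_tail_bound N M t : (N <= M)%nat -> Qproj N (v a) = (fun _ => 0) -> a <= t <= b ->
  l2 (Qproj M (v t)) /\ nrm (Qproj M (v t)) <= K0 / lam M.
Proof.
  intros HNM HQ Ht. pose proof (lam_pos M) as HlM.
  assert (HK0 : 0 <= K0)
    by (pose proof (hFbnd _ (proj1 (proj1 hv) a ltac:(lra))); pose proof (nrm_nonneg (F (v a))); lra).
  set (G := fun k tau => exp (- lam M * (t - tau)) * Qproj M (F (v tau)) k ^ 2).
  assert (Eexp : ex_RInt (fun tau => exp (- lam M * (t - tau))) a t)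
    by (apply (@ex_RInt_continuous R_CompleteNormedModule); intros; apply continuous_exp_decay).
  rewrite <- (sqrt_pow2 (K0 / lam M)) by (apply Rdiv_le_0_compat; lra).
  apply l2_of_partial_sums. intros K.
  destruct (RInt_sum_n G a t K (fun k => ex_RInt_Qproj_Fcoord_sq M k t Ht)) as [Esum Isum].
  eapply Rle_trans.
  { apply (sum_n_le_R _ (fun k => / lam M * RInt (G k) a t)). intros k. now apply (mild_Qproj_coord_sq_le N). }
  rewrite sum_n_mult_l_R.
  replace ((K0 / lam M) ^ 2) with (/ lam M * (K0 ^ 2 * / lam M)) by (field; lra).
  apply Rmult_le_compat_l; [left; now apply Rinv_0_lt_compat|].
  eapply Rle_trans; [apply Req_le; symmetry; exact Isum|].
  apply (Rle_trans _ (RInt (fun tau => K0 ^ 2 * exp (- lam M * (t - tau))) a t)).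
  - apply RInt_le; [lra | exact Esum | now apply (ex_RInt_scal (V := R_NormedModule)) |].
    intros tau Htau. unfold G. rewrite sum_n_mult_l_R, Rmult_comm.
    apply Rmult_le_compat_r; [left; apply exp_pos|].
    apply partial_sum_Qproj_F_le, (proj1 (proj1 hv)). lra.
  - rewrite (RInt_scal (V := R_CompleteNormedModule)) by exact Eexp.
    apply Rmult_le_compat_l; [apply pow2_ge_0|]. apply RInt_exp_decay_le; lra.
Qed.

End Solution.

Lemma H_continuous_on_subset (J J' : R -> Prop) (u : R -> vec) :
  (forall s, J' s -> J s) -> H_continuous_on J u -> H_continuous_on J' u.
Proof.
  intros HJ [Hl2 Hc]. split; [intros; now apply Hl2, HJ|].
  intros t Ht eps Heps. destruct (Hc t (HJ t Ht) eps Heps) as [d [Hd H]].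
  exists d. split; [exact Hd|]. intros s Hs. now apply H, HJ.
Qed.

Lemma head_tail_budget (M : nat) eps tau : 0 < eps -> tau < eps / 4 ->
  INR M * (eps / (4 * (INR M + 1))) + 2 * tau < eps.
Proof.
  intros Heps Htau. pose proof (pos_INR M).
  assert (INR M * (eps / (4 * (INR M + 1))) < eps / 4); [|lra].
  apply (Rmult_lt_reg_r (4 * (INR M + 1))); [lra|]. field_simplify; nra.
Qed.

(** * Backward limits *)

Section Backward.

Variable N : nat.
Hypothesis hlam_inf : is_lim_seq lam p_infty.
Variables (T : nat -> R) (W : nat -> R -> vec) (x : vec).
Hypothesis hW : forall j, mild_solution lam F (fun s => - T j <= s <= 0) (W j).
Hypothesis hWQ : forall j, Qproj N (W j (- T j)) = (fun _ => 0).
Hypothesis hT : forall T0, eventually (fun j => T0 <= T j).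
Hypothesis hx : l2 x.
Hypothesis hWx : is_lim_seq (fun j => vdist (W j 0) x) 0.

Lemma K0_nonneg : 0 <= K0.
Proof. pose proof (hFbnd x hx). pose proof (nrm_nonneg (F x)). lra. Qed.

Lemma lam_large eps : 0 < eps -> exists M, (N <= M)%nat /\ K0 / lam M < eps.
Proof.
  intros Heps. apply is_lim_seq_spec in hlam_inf. destruct (hlam_inf (K0 / eps)) as [M0 HM0].
  exists (Nat.max N M0). split; [lia|]. specialize (HM0 (Nat.max N M0) ltac:(lia)).
  pose proof (lam_pos (Nat.max N M0)).
  apply (Rmult_lt_reg_r (lam (Nat.max N M0))); [lra|].
  apply (Rmult_lt_compat_l eps) in HM0; [|exact Heps].
  replace (eps * (K0 / eps)) with K0 in HM0 by (field; lra).
  replace (K0 / lam (Nat.max N M0) * lam (Nat.max N M0)) with K0 by (field; lra). lra.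
Qed.

(* The backward bound on [W j t k] over [-T0, 0] once [T0 <= T j] and [vdist (W j 0) x <= 1]. *)
Definition coord_bound k T0 := exp (lam k * T0) * (Rabs (x k) + 1 + K0 * T0).

Definition coord_lip k T0 := lam k * coord_bound k T0 + K0.

Lemma coord_lip_nonneg k T0 : 0 <= T0 -> 0 <= coord_lip k T0.
Proof.
  intros HT0. pose proof K0_nonneg. pose proof (lam_pos k). pose proof (exp_pos (lam k * T0)).
  pose proof (Rabs_pos (x k)). unfold coord_lip, coord_bound.
  assert (0 <= exp (lam k * T0) * (Rabs (x k) + 1 + K0 * T0)) by (apply Rmult_le_pos; nra). nra.
Qed.

Lemma eventually_long_and_close T0 : eventually (fun j => T0 <= T j /\ vdist (W j 0) x <= 1).
Proof.
  apply filter_and; [apply hT|]. apply is_lim_seq_spec in hWx. revert hWx.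
  intros Hcv. apply (filter_imp (fun j => Rabs (vdist (W j 0) x - 0) < 1)); [|exact (Hcv (mkposreal 1 Rlt_0_1))].
  intros j Hj. apply Rabs_lt_between' in Hj. lra.
Qed.

Lemma W_coord_bound j k T0 t : T0 <= T j -> vdist (W j 0) x <= 1 -> - T0 <= t <= 0 ->
  Rabs (W j t k) <= coord_bound k T0.
Proof.
  intros HT Hd Ht. pose proof (lam_pos k). pose proof K0_nonneg.
  eapply Rle_trans; [apply (mild_coord_backward_bound (- T j) 0 (W j) (hW j)); lra|].
  assert (Hl2 : l2 (W j 0)) by (apply (proj1 (proj1 (hW j))); lra).
  pose proof (coord_le_vdist _ _ k Hl2 hx).
  assert (Rabs (W j 0 k) <= Rabs (x k) + 1).
  { replace (W j 0 k) with ((W j 0 k - x k) + x k) by ring. pose proof (Rabs_triang (W j 0 k - x k) (x k)). lra. }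
  unfold coord_bound. apply Rmult_le_compat.
  - left; apply exp_pos.
  - pose proof (Rabs_pos (W j 0 k)). nra.
  - apply exp_le. nra.
  - nra.
Qed.

Lemma W_coord_lipschitz j k T0 s t : T0 <= T j -> vdist (W j 0) x <= 1 ->
  - T0 <= s <= 0 -> - T0 <= t <= 0 -> Rabs (W j t k - W j s k) <= coord_lip k T0 * Rabs (t - s).
Proof.
  intros HT Hd Hs Ht.
  assert (Hord : forall s t, - T0 <= s -> s <= t -> t <= 0 ->
                   Rabs (W j t k - W j s k) <= coord_lip k T0 * Rabs (t - s)).
  { clear s t Hs Ht. intros s t H1 H2 H3.
    eapply Rle_trans; [apply (mild_coord_lipschitz (- T j) 0 (W j) (hW j)); lra|].
    rewrite (Rabs_pos_eq (t - s)) by lra. apply Rmult_le_compat_r; [lra|].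
    pose proof (W_coord_bound j k T0 s HT Hd ltac:(lra)). pose proof (lam_pos k).
    unfold coord_lip. nra. }
  destruct (Rle_dec s t); [apply Hord; lra|].
  rewrite Rabs_minus_sym, (Rabs_minus_sym t s). apply Hord; lra.
Qed.

(* The index [m] of the diagonal process encodes a coordinate and a grid point by Cantor pairing. *)
Lemma W_grid_subseq : exists phi, strictly_increasing phi /\
  forall k i q, ex_finite_lim_seq (fun j => W (phi j) (grid i q) k).
Proof.
  destruct (diagonal_subseq (fun m j => let '(k, r) := Cantor.of_nat m in
                                        let '(i, q) := Cantor.of_nat r in W j (grid i q) k))
    as [phi [Hphi Hcv]].
  - intros m. destruct (Cantor.of_nat m) as [k r]. destruct (Cantor.of_nat r) as [i q].
    set (T0 := INR i / (INR q + 1)).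
    assert (HT0 : - T0 <= grid i q <= 0).
    { unfold grid, T0. pose proof (pos_INR q).
      assert (0 <= INR i / (INR q + 1)) by (apply Rdiv_le_0_compat; [apply pos_INR | lra]). lra. }
    exists (coord_bound k T0).
    apply (filter_imp (F := eventually) _ _ (fun j H => W_coord_bound j k T0 _ (proj1 H) (proj2 H) HT0)).
    apply eventually_long_and_close.
  - exists phi. split; [exact Hphi|]. intros k i q.
    specialize (Hcv (Cantor.to_nat (k, Cantor.to_nat (i, q)))). now rewrite !Cantor.cancel_of_to in Hcv.
Qed.

Section Limit.

Variable phi : nat -> nat.
Hypothesis hphi : strictly_increasing phi.
Hypothesis hphi_grid : forall k i q, ex_finite_lim_seq (fun j => W (phi j) (grid i q) k).

(* [real (Lim_seq _)] is junk unless the limit exists; [subseq_coord_cv] shows that it does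
   for [t <= 0]. *)
Definition limit_path (t : R) : vec := fun k => real (Lim_seq (fun j => W (phi j) t k)).

Lemma subseq_eventually_long_and_close T0 :
  eventually (fun j => T0 <= T (phi j) /\ vdist (W (phi j) 0) x <= 1).
Proof.
  destruct (eventually_long_and_close T0) as [J HJ]. exists J. intros j Hj.
  apply HJ. pose proof (strictly_increasing_ge _ hphi j). lia.
Qed.

Lemma subseq_coord_unif_cv k T0 : 0 <= T0 -> forall eps, 0 < eps ->
  eventually (fun j => forall t, - T0 <= t <= 0 -> Rabs (W (phi j) t k - limit_path t k) < eps).
Proof.
  intros HT0 eps Heps.
  destruct (uniformly_cauchy_cv (fun j t => W (phi j) t k) (fun t => - T0 <= t <= 0)
              (grid_lipschitz_uniformly_cauchy _ T0 (coord_lip k T0) (coord_lip_nonneg k T0 HT0)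
                 (filter_imp (F := eventually) _ _
                    (fun j H s t Hs Ht => W_coord_lipschitz (phi j) k T0 s t (proj1 H) (proj2 H) Hs Ht)
                    (subseq_eventually_long_and_close T0))
                 (fun i q => hphi_grid k i q)) eps Heps) as [J HJ].
  exists J. intros j Hj t Ht. exact (HJ j t Hj Ht).
Qed.

Lemma subseq_coord_cv t k : t <= 0 -> is_lim_seq (fun j => W (phi j) t k) (limit_path t k).
Proof.
  intros Ht. apply is_lim_seq_spec. intros eps.
  destruct (subseq_coord_unif_cv k (- t) ltac:(lra) eps (cond_pos eps)) as [J HJ].
  exists J. intros j Hj. apply HJ; [exact Hj | lra].
Qed.

Lemma limit_coord_lipschitz k T0 s t : - T0 <= s <= 0 -> - T0 <= t <= 0 ->
  Rabs (limit_path t k - limit_path s k) <= coord_lip k T0 * Rabs (t - s).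
Proof.
  intros Hs Ht.
  refine (is_lim_seq_le_loc (fun j => Rabs (W (phi j) t k - W (phi j) s k))
            (fun _ => coord_lip k T0 * Rabs (t - s)) (Rabs (limit_path t k - limit_path s k))
            _ _ _ (is_lim_seq_const _)).
  - apply (filter_imp (F := eventually) _ _
             (fun j H => W_coord_lipschitz (phi j) k T0 s t (proj1 H) (proj2 H) Hs Ht)).
    apply subseq_eventually_long_and_close.
  - apply (is_lim_seq_abs _ (Finite (limit_path t k - limit_path s k))).
    apply is_lim_seq_minus'; apply subseq_coord_cv; lra.
Qed.

Lemma limit_tail t M : t <= 0 -> (N <= M)%nat ->
  l2 (Qproj M (limit_path t)) /\ nrm (Qproj M (limit_path t)) <= K0 / lam M.
Proof.
  intros Ht HNM. apply (l2_limit (fun j => Qproj M (W (phi j) t))).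
  - intros k. unfold Qproj. destruct (k <? M)%nat; [apply is_lim_seq_const | now apply subseq_coord_cv].
  - destruct (subseq_eventually_long_and_close (- t)) as [J HJ]. exists J. intros j Hj.
    destruct (HJ j Hj) as [HT _].
    apply (mild_tail_bound (- T (phi j)) 0 (W (phi j)) (hW (phi j)) N M t HNM (hWQ (phi j))). lra.
Qed.

Lemma limit_l2 t : t <= 0 -> l2 (limit_path t).
Proof. intros Ht. exact (l2_of_l2_Qproj N _ (proj1 (limit_tail t N Ht (le_n N)))). Qed.

Lemma subseq_unif_cv T0 : 0 <= T0 -> forall eps, 0 < eps ->
  eventually (fun j => forall t, - T0 <= t <= 0 -> vdist (W (phi j) t) (limit_path t) < eps).
Proof.
  intros HT0 eps Heps. destruct (lam_large (eps / 4)) as [M [HNM HM]]; [lra|].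
  set (c := eps / (4 * (INR M + 1))).
  assert (Hc : 0 < c) by (unfold c; pose proof (pos_INR M); apply Rdiv_lt_0_compat; lra).
  apply (filter_imp (fun j => (forall k, (k < M)%nat -> forall t, - T0 <= t <= 0 ->
                                 Rabs (W (phi j) t k - limit_path t k) < c) /\ T0 <= T (phi j))).
  - intros j [Hhead HT] t Ht. eapply Rle_lt_trans; [|apply (head_tail_budget M eps _ Heps HM)].
    apply vdist_le_head_tail.
    + apply (proj1 (proj1 (hW (phi j)))). lra.
    + apply limit_l2. lra.
    + left. exact Hc.
    + intros k Hk. left. now apply Hhead.
    + apply (mild_tail_bound (- T (phi j)) 0 (W (phi j)) (hW (phi j)) N M t HNM (hWQ (phi j))). lra.
    + apply limit_tail; [lra | exact HNM].
  - apply filter_and.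
    + apply eventually_forall_lt. intros k _. now apply subseq_coord_unif_cv.
    + destruct (subseq_eventually_long_and_close T0) as [J HJ]. exists J. intros j Hj. apply (HJ j Hj).
Qed.

Lemma limit_continuous : H_continuous_on (fun s => s <= 0) limit_path.
Proof.
  split; [exact limit_l2|]. intros t Ht eps Heps.
  destruct (lam_large (eps / 4)) as [M [HNM HM]]; [lra|].
  set (T0 := - t + 1). set (c := eps / (4 * (INR M + 1))).
  assert (Hc : 0 < c) by (unfold c; pose proof (pos_INR M); apply Rdiv_lt_0_compat; lra).
  destruct (finite_upper_bound (fun k => coord_lip k T0) M) as [Lmax HLmax].
  set (delta := Rmin 1 (c / (Rabs Lmax + 1))).
  assert (Hd : 0 < delta) by (apply Rmin_glb_lt; [lra | apply Rdiv_lt_0_compat; pose proof (Rabs_pos Lmax); lra]).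
  exists delta. split; [exact Hd|]. intros s Hs Hst.
  assert (Hd1 : delta <= 1) by apply Rmin_l.
  assert (Hd2 : delta <= c / (Rabs Lmax + 1)) by apply Rmin_r.
  assert (Hs1 : Rabs (s - t) < 1) by lra.
  apply Rabs_lt_between' in Hs1.
  eapply Rle_lt_trans; [|apply (head_tail_budget M eps _ Heps HM)].
  apply vdist_le_head_tail; [apply limit_l2; lra | apply limit_l2; lra | left; exact Hc | | |].
  - intros k Hk. eapply Rle_trans; [apply (limit_coord_lipschitz k T0); unfold T0; lra|].
    pose proof (coord_lip_nonneg k T0 ltac:(unfold T0; lra)). specialize (HLmax k Hk).
    pose proof (Rabs_pos (s - t)).
    assert (coord_lip k T0 <= Rabs Lmax + 1) by (pose proof (Rle_abs Lmax); lra).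
    apply (Rle_trans _ ((Rabs Lmax + 1) * (c / (Rabs Lmax + 1)))).
    + apply Rmult_le_compat; lra.
    + right. unfold c. field. pose proof (Rabs_pos Lmax). pose proof (pos_INR M). lra.
  - apply limit_tail; [lra | exact HNM].
  - apply limit_tail; [lra | exact HNM].
Qed.

Lemma subseq_RInt_Fcoord_cv s t k : s <= t -> t <= 0 ->
  is_lim_seq (fun j => RInt (fun tau => exp (- lam k * (t - tau)) * F (W (phi j) tau) k) s t)
             (RInt (fun tau => exp (- lam k * (t - tau)) * F (limit_path tau) k) s t).
Proof.
  intros Hst Ht. apply is_lim_seq_spec. intros eps.
  set (delta := eps / ((t - s) * K1 + 1)).
  assert (Hdelta : 0 < delta) by (unfold delta; apply Rdiv_lt_0_compat; [apply cond_pos | nra]).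
  apply (filter_imp (fun j => (forall tau, - (- s) <= tau <= 0 ->
                                 vdist (W (phi j) tau) (limit_path tau) < delta) /\ - s <= T (phi j))).
  - intros j [Hunif HT].
    assert (HJ : forall tau, s <= tau <= t -> s <= tau <= 0) by (intros; lra).
    eapply Rle_lt_trans; [apply (RInt_Fcoord_diff (fun tau => s <= tau <= 0)); try exact HJ; try lra|].
    + apply (H_continuous_on_subset (fun tau => - T (phi j) <= tau <= 0)); [intros; lra | apply (hW (phi j))].
    + apply (H_continuous_on_subset (fun tau => tau <= 0)); [intros; lra | exact limit_continuous].
    + intros tau Htau. left. apply Hunif. lra.
    + pose proof (cond_pos eps). unfold delta.
      apply (Rle_lt_trans _ ((t - s) * K1 * (eps / ((t - s) * K1 + 1)))); [right; ring|].
      apply (Rmult_lt_reg_r ((t - s) * K1 + 1)); [nra|]. field_simplify; nra.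
  - apply filter_and; [apply subseq_unif_cv; lra|].
    destruct (subseq_eventually_long_and_close (- s)) as [J HJ]. exists J. intros j Hj. apply (HJ j Hj).
Qed.

Lemma limit_formula s t k : s <= t -> t <= 0 ->
  limit_path t k = exp (- lam k * (t - s)) * limit_path s k
                   + RInt (fun tau => exp (- lam k * (t - tau)) * F (limit_path tau) k) s t.
Proof.
  intros Hst Ht.
  assert (Hdiff : is_lim_seq (fun j => W (phi j) t k - exp (- lam k * (t - s)) * W (phi j) s k)
                    (limit_path t k - exp (- lam k * (t - s)) * limit_path s k)).
  { apply is_lim_seq_minus'; [apply subseq_coord_cv; lra|].
    apply (is_lim_seq_scal_l _ _ (Finite (limit_path s k))). apply subseq_coord_cv. lra. }
  assert (Heq : eventually (fun j => RInt (fun tau => exp (- lam k * (t - tau)) * F (W (phi j) tau) k) s t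
                                     = W (phi j) t k - exp (- lam k * (t - s)) * W (phi j) s k)).
  { destruct (subseq_eventually_long_and_close (- s)) as [J HJ]. exists J. intros j Hj.
    destruct (HJ j Hj) as [HT _].
    rewrite (proj2 (hW (phi j)) s t ltac:(lra) ltac:(lra) Hst k). lra. }
  pose proof (is_lim_seq_unique _ _ Hdiff) as E1.
  pose proof (is_lim_seq_unique _ _ (is_lim_seq_ext_loc _ _ _ Heq (subseq_RInt_Fcoord_cv s t k Hst Ht))) as E2.
  rewrite E2 in E1. injection E1 as E. lra.
Qed.

Lemma limit_at_0 : limit_path 0 = x.
Proof.
  apply functional_extensionality. intros k. unfold limit_path.
  assert (Hsub := is_lim_seq_subseq _ _ phi (eventually_subseq phi hphi) hWx).
  replace (Lim_seq (fun j => W (phi j) 0 k)) with (Finite (x k)); [reflexivity|].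
  symmetry. apply is_lim_seq_unique, is_lim_seq_spec. intros eps.
  apply is_lim_seq_spec in Hsub. destruct (Hsub eps) as [J1 HJ1].
  destruct (subseq_eventually_long_and_close 0) as [J2 HJ2]. exists (Nat.max J1 J2). intros j Hj.
  specialize (HJ1 j ltac:(lia)). specialize (HJ2 j ltac:(lia)) as [HT _].
  rewrite Rminus_0_r, Rabs_pos_eq in HJ1 by apply nrm_nonneg.
  eapply Rle_lt_trans; [apply coord_le_vdist; [apply (proj1 (proj1 (hW (phi j)))); lra | exact hx] | exact HJ1].
Qed.

Lemma limit_backward_solution : M_minf lam F N x.
Proof.
  exists limit_path. split; [split; [exact limit_continuous | intros s t Hs Ht Hst k; now apply limit_formula]|].
  split; [exact limit_at_0|]. exists (K0 / lam N). intros t Ht. exact (proj2 (limit_tail t N Ht (le_n N))).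
Qed.

End Limit.

Lemma backward_solution_of_shifted : M_minf lam F N x.
Proof. destruct W_grid_subseq as [phi [Hphi Hgrid]]. exact (limit_backward_solution phi Hphi Hgrid). Qed.

End Backward.

Lemma shifted_solutions_of_M_inf N x : M_inf lam F N x ->
  exists (T : nat -> R) (W : nat -> R -> vec),
    (forall j, mild_solution lam F (fun s => - T j <= s <= 0) (W j)) /\
    (forall j, Qproj N (W j (- T j)) = (fun _ => 0)) /\
    (forall T0, eventually (fun j => T0 <= T j)) /\
    is_lim_seq (fun j => vdist (W j 0) x) 0.
Proof.
  intros [_ [n [xs [_ [Hn [HM Hlim]]]]]]. destruct (choice _ HM) as [U HU].
  exists (fun j => INR (n j)), (fun j t => U j (t + INR (n j))). split; [|split; [|split]].
  - intros j. apply mild_solution_shift, HU.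
  - intros j. replace (- INR (n j) + INR (n j)) with 0 by ring. apply HU.
  - intros T0. destruct (INR_unbounded T0) as [J HJ]. exists J. intros j Hj.
    assert (Hjn : (J <= n j)%nat) by (pose proof (strictly_increasing_ge n Hn j); lia).
    apply le_INR in Hjn. lra.
  - apply (is_lim_seq_ext (fun j => vdist (xs j) x)); [|exact Hlim].
    intros j. rewrite Rplus_0_l. now destruct (HU j) as [_ [_ ->]].
Qed.

End MildSolution.

Theorem theorem4p1
  (lam : nat -> R) (N : nat) (F : vec -> vec) (K0 K1 Rad : R)
  (hlam0 : 0 < lam 0%nat)
  (hlam01 : lam 0%nat < lam 1%nat)
  (hlam_mono : forall k, lam k <= lam (S k))
  (hlam_inf : is_lim_seq lam p_infty)
  (hN : (1 <= N)%nat)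
  (hgap : lam (pred N) < lam N)
  (hK0 : 0 < K0) (hK1 : 0 < K1) (hK1gap : K1 < lam N)
  (hFl2 : forall v, l2 v -> l2 (F v))
  (hFbnd : forall v, l2 v -> nrm (F v) <= K0)
  (hFlip : forall v w, l2 v -> l2 w -> vdist (F v) (F w) <= K1 * vdist v w)
  (hRad : 0 < Rad)
  (hFsupp : forall v, l2 v -> Rad <= nrm v -> F v = (fun _ => 0)) :
  forall x, M_inf lam F N x -> M_minf lam F N x.
Proof.
  intros x Hx.
  destruct (shifted_solutions_of_M_inf lam F K1 hK1 hFl2 hFlip N x Hx) as [T [W [HW [HWQ [HT HWx]]]]].
  exact (backward_solution_of_shifted lam F K0 K1 hlam0 hlam_mono hK1 hFl2 hFbnd hFlip
           N hlam_inf T W x HW HWQ HT (proj1 Hx) HWx).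
Qed.
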